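(* There is a universal constant $\alpha>0$ such that the following holds. Let $1/2<r\le1$ and $\beta_0,\beta_1>0$ with $\beta_0+\beta_1\zeta(2r)=1$, and let \[ K_1(x,y)=\beta_0+\beta_1\sum_{k=1}^\infty k^{-2r}\cos(2\pi k(x-y)),\qquad x,y\in\mathbb{T}. \] Then $K_1(x,x)=1$ for all $x\in\mathbb{T}$ and \[ K_1(x,y)\ge1-\alpha\,d_{\mathbb{T}}(x,y)^{2r-1}\quad\text{for all }x,y\in\mathbb{T}\text{ with }d_{\mathbb{T}}(x,y)\le\frac{1}{\sqrt2\,\pi}, \] i.e. the local lower bound $K_1(x,y)\ge1-\alpha\,d_{\mathbb{T}}(x,y)^p$ holds with $p=2r-1$ and $R_0=1/(\sqrt2\,\pi)$.
   Context: $\mathbb{T}=[0,1)$ is the one-dimensional torus with metric $d_{\mathbb{T}}(x,y):=\min_{k\in\{-1,0,1\}}|x-y+k|$; $\zeta$ is the Riemann zeta function. $K_1$ is the reproducing kernel of the one-dimensional Korobov space of smoothness $r$. *)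

From Stdlib Require Import Reals.
From Coquelicot Require Import Coquelicot.
Open Scope R_scope.

Definition in_torus (x : R) : Prop := 0 <= x < 1.

Definition dT (x y : R) : R :=
  Rmin (Rabs (x - y - 1)) (Rmin (Rabs (x - y)) (Rabs (x - y + 1))).

(* real power t^p for t >= 0, with the convention 0^p = 0 (used for p > 0) *)
Definition rpow (t p : R) : R :=
  if Req_EM_T t 0 then 0 else Rpower t p.

Definition zeta (s : R) : R :=
  Series (fun n : nat => Rpower (INR (S n)) (- s)).

Definition K1 (r beta0 beta1 x y : R) : R :=
  beta0 + beta1 *
    Series (fun n : nat =>
      Rpower (INR (S n)) (- (2 * r)) * cos (2 * PI * INR (S n) * (x - y))).

From Stdlib Require Import Reals Lra Lia.
From Coquelicot Require Import Coquelicot.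
Open Scope R_scope.

(* Write s = 2r - 1 in (0,1] and pick t with x - y = t mod 1 and |t| = d_T(x,y) =: d.
   Since beta0 + beta1 zeta(1+s) = 1, we get
     1 - K_1(x,y) = beta1 sum_k k^(-1-s) (1 - cos 2 pi k t).
   Choose N with 1/2 <= d N <= 1.  For k <= N, 1 - cos u <= u^2/2 bounds the terms by
   2 pi^2 d^2 N^(1-s), in total at most 2 pi^2 d^s.  For k > N, 1 - cos u <= 2 and
   k^(-1-s) <= ((k-1)^(-s) - k^(-s))/s telescope to (2/s) N^(-s) <= (4/s) d^s.
   The factor 1/s is absorbed by beta1: the reverse telescoping bound gives
   zeta(1+s) >= 1/(2s), hence beta1 <= 2s.  So alpha = 100 works; the radius
   1/(sqrt 2 pi) is only used through d <= 1/2. *)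

Lemma sin_sqr_le x : sin x ^ 2 <= x ^ 2.
Proof.
  assert (Hpos : forall y, 0 < y -> - y <= sin y < y).
  { intros y Hy. split; [|exact (sin_lt_x y Hy)].
    destruct (Rle_lt_dec 1 y) as [Hy1 | Hy1].
    - pose proof (SIN_bound y); lra.
    - assert (0 < sin y) by (apply sin_gt_0; pose proof PI2_1; lra). lra. }
  destruct (Rtotal_order x 0) as [Hx | [-> | Hx]].
  - pose proof (Hpos (- x) ltac:(lra)) as Hs. rewrite sin_neg in Hs. nra.
  - rewrite sin_0. lra.
  - pose proof (Hpos x Hx). nra.
Qed.

Lemma one_sub_cos_le x : 1 - cos x <= x ^ 2 / 2.
Proof.
  replace x with (2 * (x / 2)) at 1 by field.
  rewrite cos_2a_sin. pose proof (sin_sqr_le (x / 2)). nra.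
Qed.

Lemma ln_ge_1_sub_inv x : 0 < x -> 1 - / x <= ln x.
Proof.
  intros Hx. pose proof (exp_ineq1_le (ln (/ x))) as H.
  rewrite exp_ln in H by (apply Rinv_0_lt_compat; lra).
  rewrite ln_Rinv in H by lra. lra.
Qed.

Lemma Rpower_1_l p : Rpower 1 p = 1.
Proof. unfold Rpower. rewrite ln_1, Rmult_0_r. apply exp_0. Qed.

Lemma Rpower_le_1 a p : 0 < a <= 1 -> 0 <= p -> Rpower a p <= 1.
Proof. intros Ha Hp. rewrite <- (Rpower_1_l p). apply Rle_Rpower_l; lra. Qed.

Lemma Rpower_ge_1 a p : 1 <= a -> 0 <= p -> 1 <= Rpower a p.
Proof. intros Ha Hp. rewrite <- (Rpower_O a) by lra. apply Rle_Rpower; lra. Qed.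

Lemma Rpower_pos a p : 0 < Rpower a p.
Proof. apply exp_pos. Qed.

Lemma Rpower_opp_succ a s : 0 < a -> Rpower a (- (1 + s)) = Rpower a (- s) / a.
Proof.
  intros Ha. replace (- (1 + s)) with (- s + - (1)) by ring.
  rewrite Rpower_plus, (Rpower_Ropp a 1), Rpower_1 by lra. reflexivity.
Qed.

Lemma Rpower_opp_ge a b s : 0 < a -> 0 < b ->
  Rpower a (- s) * (1 + s * ln (a / b)) <= Rpower b (- s).
Proof.
  intros Ha Hb.
  assert (E : Rpower b (- s) = Rpower a (- s) * exp (s * ln (a / b))).
  { unfold Rpower. rewrite <- exp_plus, ln_div by lra. f_equal. ring. }
  rewrite E. apply Rmult_le_compat_l; [left; apply Rpower_pos | apply exp_ineq1_le].
Qed.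

Lemma Rpower_opp_diff_ge s m : 0 < s -> 0 < m ->
  s * Rpower (m + 1) (- (1 + s)) <= Rpower m (- s) - Rpower (m + 1) (- s).
Proof.
  intros Hs Hm. rewrite Rpower_opp_succ by lra.
  pose proof (Rpower_opp_ge (m + 1) m s ltac:(lra) Hm) as H.
  pose proof (ln_ge_1_sub_inv ((m + 1) / m) ltac:(apply Rdiv_lt_0_compat; lra)) as Hln.
  replace (1 - / ((m + 1) / m)) with (/ (m + 1)) in Hln by (field; lra).
  pose proof (Rpower_pos (m + 1) (- s)).
  assert (0 <= s * Rpower (m + 1) (- s)) by nra.
  unfold Rdiv at 1. nra.
Qed.

Lemma Rpower_opp_diff_le s m : 0 < s -> 0 < m ->
  Rpower m (- s) - Rpower (m + 1) (- s) <= s * Rpower m (- (1 + s)).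
Proof.
  intros Hs Hm. rewrite Rpower_opp_succ by lra.
  pose proof (Rpower_opp_ge m (m + 1) s Hm ltac:(lra)) as H.
  pose proof (ln_ge_1_sub_inv (m / (m + 1)) ltac:(apply Rdiv_lt_0_compat; lra)) as Hln.
  replace (1 - / (m / (m + 1))) with (- / m) in Hln by (field; lra).
  pose proof (Rpower_pos m (- s)).
  assert (0 <= s * Rpower m (- s)) by nra.
  unfold Rdiv at 1. nra.
Qed.

Lemma sum_n_telescope_ge (u c : nat -> R) :
  (forall j, c j - c (S j) <= u j) -> forall n, c 0%nat - c (S n) <= sum_n u n.
Proof.
  intros Hu n. induction n as [|n IH].
  - rewrite sum_O. apply Hu.
  - rewrite sum_Sn. specialize (Hu (S n)). change (plus ?a ?b) with (a + b). lra.
Qed.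

Lemma sum_n_split_le (u c : nat -> R) (N : nat) (C : R) :
  0 <= C -> (forall j, 0 <= c j) ->
  (forall j, (j < N)%nat -> u j <= C) ->
  (forall j, (N <= j)%nat -> u j <= c j - c (S j)) ->
  forall n, sum_n u n <= INR N * C + c N.
Proof.
  intros HC Hc Hlow Hhigh.
  assert (Hinv : forall n,
    sum_n u n <= INR (Nat.min (S n) N) * C + (c N - c (Nat.max N (S n)))).
  { intros n. induction n as [|n IH].
    - rewrite sum_O. destruct N as [|N].
      + simpl. specialize (Hhigh 0%nat (le_n 0)). lra.
      + rewrite Nat.min_l, Nat.max_l by lia. specialize (Hlow 0%nat ltac:(lia)). simpl. lra.
    - rewrite sum_Sn. change (plus ?a ?b) with (a + b).
      destruct (Nat.lt_ge_cases (S n) N) as [HnN | HnN].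
      + rewrite (Nat.min_l (S n)), (Nat.max_l N (S n)) in IH by lia.
        rewrite Nat.min_l, Nat.max_l by lia. rewrite (S_INR (S n)).
        specialize (Hlow (S n) HnN). lra.
      + rewrite (Nat.min_r (S n)), (Nat.max_r N (S n)) in IH by lia.
        rewrite Nat.min_r, Nat.max_r by lia.
        specialize (Hhigh (S n) HnN). lra. }
  intros n. specialize (Hinv n).
  assert (INR (Nat.min (S n) N) <= INR N) by (apply le_INR; lia).
  specialize (Hc (Nat.max N (S n))). nra.
Qed.

Lemma ex_series_of_sum_n_le (a : nat -> R) M :
  (forall n, 0 <= a n) -> (forall n, sum_n a n <= M) -> ex_series a.
Proof.
  intros Ha HM.
  destruct (ex_finite_lim_seq_incr (sum_n a) M) as [l Hl]; [|exact HM|now exists l].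
  intros n. rewrite sum_Sn. specialize (Ha (S n)). change (plus ?x ?y) with (x + y). lra.
Qed.

Lemma Series_le_of_sum_n (a : nat -> R) M :
  ex_series a -> (forall n, sum_n a n <= M) -> Series a <= M.
Proof.
  intros Ha HM.
  apply (is_lim_seq_le (sum_n a) (fun _ => M) (Series a) M HM (Series_correct a Ha)).
  apply is_lim_seq_const.
Qed.

Lemma sum_n_le_Series (a : nat -> R) n :
  ex_series a -> (forall k, 0 <= a k) -> sum_n a n <= Series a.
Proof.
  intros Ha Hpos. change (Rbar_le (sum_n a n) (Series a)).
  apply (is_lim_seq_le_loc (fun _ => sum_n a n) (sum_n a));
    [|apply is_lim_seq_const|apply Series_correct, Ha].
  exists n. intros m Hm. induction Hm as [|m _ IH]; [lra|].
  rewrite sum_Sn. specialize (Hpos (S m)). change (plus ?x ?y) with (x + y). lra.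
Qed.

Definition zeta_term (s : R) (n : nat) : R := Rpower (INR (S n)) (- s).

Lemma zeta_term_pos s n : 0 < zeta_term s n.
Proof. apply Rpower_pos. Qed.

Lemma zeta_term_le_diff s n : 0 < s -> (1 <= n)%nat ->
  zeta_term (1 + s) n <= Rpower (INR n) (- s) / s - Rpower (INR (S n)) (- s) / s.
Proof.
  intros Hs Hn. apply Rmult_le_reg_l with s; [exact Hs|].
  replace (s * (_ / s - _ / s)) with
    (Rpower (INR n) (- s) - Rpower (INR (S n)) (- s)) by (field; lra).
  unfold zeta_term. rewrite S_INR.
  apply Rpower_opp_diff_ge; [exact Hs|]. apply lt_0_INR; lia.
Qed.

Lemma zeta_term_ge_diff s n : 0 < s ->
  Rpower (INR (S n)) (- s) / s - Rpower (INR (S (S n))) (- s) / s <= zeta_term (1 + s) n.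
Proof.
  intros Hs. apply Rmult_le_reg_l with s; [exact Hs|].
  replace (s * (_ / s - _ / s)) with
    (Rpower (INR (S n)) (- s) - Rpower (INR (S (S n))) (- s)) by (field; lra).
  unfold zeta_term. rewrite (S_INR (S n)).
  apply Rpower_opp_diff_le; [exact Hs|]. apply lt_0_INR; lia.
Qed.

Lemma sum_n_zeta_le s n : 0 < s -> sum_n (zeta_term (1 + s)) n <= 1 + 1 / s.
Proof.
  intros Hs.
  replace (1 + 1 / s) with (INR 1 * 1 + Rpower (INR 1) (- s) / s)
    by (simpl INR; rewrite Rpower_1_l; lra).
  apply (sum_n_split_le _ (fun j => Rpower (INR j) (- s) / s)).
  - lra.
  - intros j. apply Rdiv_le_0_compat; [left; apply Rpower_pos | exact Hs].
  - intros j Hj. replace j with 0%nat by lia. unfold zeta_term. simpl INR.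
    rewrite Rpower_1_l. lra.
  - intros j Hj. now apply zeta_term_le_diff.
Qed.

Lemma ex_series_zeta s : 0 < s -> ex_series (zeta_term (1 + s)).
Proof.
  intros Hs. apply (ex_series_of_sum_n_le _ (1 + 1 / s)).
  - intros n. left. apply zeta_term_pos.
  - intros n. now apply sum_n_zeta_le.
Qed.

Lemma zeta_ge_inv s : 0 < s -> 1 / (2 * s) <= zeta (1 + s).
Proof.
  intros Hs.
  destruct (nfloor_ex (Rpower 2 (/ s))) as [n Hn]; [left; apply Rpower_pos|].
  assert (Htail : Rpower (INR (S (S n))) (- s) <= / 2).
  { rewrite Rpower_Ropp. apply Rinv_le_contravar; [lra|].
    replace 2 with (Rpower (Rpower 2 (/ s)) s) at 1
      by (rewrite Rpower_mult, Rinv_l, Rpower_1; lra).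
    apply Rle_Rpower_l; [lra|]. split; [apply Rpower_pos|]. rewrite !S_INR. lra. }
  pose proof (sum_n_telescope_ge (zeta_term (1 + s))
    (fun j => Rpower (INR (S j)) (- s) / s) (fun j => zeta_term_ge_diff s j Hs) n) as H.
  pose proof (sum_n_le_Series (zeta_term (1 + s)) n (ex_series_zeta s Hs)
    (fun k => Rlt_le _ _ (zeta_term_pos _ k))).
  cbv beta in H. change (INR 1) with 1 in H. rewrite Rpower_1_l in H.
  unfold zeta. fold (zeta_term (1 + s)).
  assert (Rpower (INR (S (S n))) (- s) / s <= / 2 / s)
    by (apply Rmult_le_compat_r; [left; apply Rinv_0_lt_compat|]; lra).
  replace (1 / (2 * s)) with (1 / s - / 2 / s) by (field; lra). lra.
Qed.

Definition cos_defect (s t : R) (n : nat) : R :=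
  zeta_term (1 + s) n * (1 - cos (2 * PI * INR (S n) * t)).

Lemma cos_defect_bounds s t n : 0 <= cos_defect s t n <= 2 * zeta_term (1 + s) n.
Proof.
  unfold cos_defect. pose proof (zeta_term_pos (1 + s) n).
  pose proof (COS_bound (2 * PI * INR (S n) * t)). split; nra.
Qed.

Lemma ex_series_cos_defect s t : 0 < s -> ex_series (cos_defect s t).
Proof.
  intros Hs.
  apply (@ex_series_le R_AbsRing R_CompleteNormedModule _ (fun n => 2 * zeta_term (1 + s) n)).
  - intros n. pose proof (cos_defect_bounds s t n).
    change (norm _) with (Rabs (cos_defect s t n)). rewrite Rabs_pos_eq; lra.
  - exact (ex_series_scal_l 2 _ (ex_series_zeta s Hs)).
Qed.

Lemma Series_cos_defect_0 s : Series (cos_defect s 0) = 0.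
Proof.
  rewrite (Series_ext _ (fun n => zeta_term (1 + s) n * 0)).
  - rewrite Series_scal_r. apply Rmult_0_r.
  - intros n. unfold cos_defect. rewrite Rmult_0_r, cos_0. f_equal. ring.
Qed.

Lemma cos_defect_le_head s t n N : s <= 1 -> (S n <= N)%nat ->
  cos_defect s t n <= 2 * PI ^ 2 * t ^ 2 * Rpower (INR N) (1 - s).
Proof.
  intros Hs HnN. unfold cos_defect, zeta_term.
  set (k := INR (S n)).
  assert (Hk : 0 < k) by apply lt_0_INR, Nat.lt_0_succ.
  assert (Hpow : Rpower k (- (1 + s)) * k ^ 2 = Rpower k (1 - s)).
  { rewrite <- (Rpower_pow 2 k Hk), <- Rpower_plus. f_equal. simpl. ring. }
  assert (HkN : Rpower k (1 - s) <= Rpower (INR N) (1 - s)).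
  { apply Rle_Rpower_l; [lra|]. split; [exact Hk|]. apply le_INR, HnN. }
  pose proof (one_sub_cos_le (2 * PI * k * t)) as Hcos.
  pose proof (Rpower_pos k (- (1 + s))).
  assert (0 <= 2 * PI ^ 2 * t ^ 2) by (pose proof PI_RGT_0; nra).
  apply Rle_trans with (Rpower k (- (1 + s)) * (2 * PI ^ 2 * t ^ 2 * k ^ 2)).
  - apply Rmult_le_compat_l; [lra|]. lra.
  - replace (_ * (_ * k ^ 2)) with (2 * PI ^ 2 * t ^ 2 * (Rpower k (- (1 + s)) * k ^ 2))
      by ring.
    rewrite Hpow. apply Rmult_le_compat_l; lra.
Qed.

Lemma cos_defect_le_tail s t n : 0 < s -> (1 <= n)%nat ->
  cos_defect s t n <= 2 / s * Rpower (INR n) (- s) - 2 / s * Rpower (INR (S n)) (- s).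
Proof.
  intros Hs Hn. pose proof (cos_defect_bounds s t n).
  pose proof (zeta_term_le_diff s n Hs Hn). unfold Rdiv in *. lra.
Qed.

Lemma exists_nat_mul_between d : 0 < d <= 1 / 2 ->
  exists N : nat, (1 <= N)%nat /\ 1 / 2 <= d * INR N <= 1.
Proof.
  intros Hd. destruct (nfloor_ex (/ d)) as [N HN]; [left; apply Rinv_0_lt_compat; lra|].
  assert (Hinv : d * / d = 1) by (field; lra).
  exists N. split; [apply INR_lt; simpl|]; nra.
Qed.

Lemma sqr_mul_Rpower_le d x s : 0 < d -> 0 < x -> d * x <= 1 -> s <= 2 ->
  x * (d ^ 2 * Rpower x (1 - s)) <= Rpower d s.
Proof.
  intros Hd Hx Hdx Hs.
  assert (Ex : x * Rpower x (1 - s) = Rpower x (2 - s)).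
  { replace (2 - s) with (1 + (1 - s)) by ring.
    rewrite Rpower_plus, Rpower_1 by lra. reflexivity. }
  assert (Ed : d ^ 2 = Rpower d s * Rpower d (2 - s)).
  { rewrite <- Rpower_plus. replace (s + (2 - s)) with (INR 2) by (simpl; ring).
    symmetry. apply Rpower_pow, Hd. }
  replace (x * (d ^ 2 * Rpower x (1 - s)))
    with (Rpower d s * (Rpower d (2 - s) * (x * Rpower x (1 - s)))) by (rewrite Ed; ring).
  rewrite Ex, Rpower_mult_distr by lra.
  pose proof (Rpower_le_1 (d * x) (2 - s) ltac:(nra) ltac:(lra)).
  pose proof (Rpower_pos d s). nra.
Qed.

Lemma Rpower_opp_le_of_mul_ge d x s : 0 < d -> 0 < x -> 1 / 2 <= d * x -> 0 <= s <= 1 ->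
  Rpower x (- s) <= 2 * Rpower d s.
Proof.
  intros Hd Hx Hdx Hs.
  rewrite Rpower_Ropp. apply (Rmult_le_reg_l (Rpower x s)); [apply Rpower_pos|].
  rewrite Rinv_r by (apply Rgt_not_eq, Rpower_pos).
  pose proof (Rpower_ge_1 (2 * (d * x)) s ltac:(lra) ltac:(lra)) as H1.
  rewrite <- !Rpower_mult_distr in H1 by nra.
  pose proof (Rle_Rpower 2 s 1 ltac:(lra) ltac:(lra)) as H2. rewrite Rpower_1 in H2 by lra.
  assert (0 < Rpower d s * Rpower x s) by (apply Rmult_lt_0_compat; apply Rpower_pos).
  nra.
Qed.

Lemma sum_n_cos_defect_le s t : 0 < s <= 1 -> 0 < Rabs t <= 1 / 2 ->
  forall n, sum_n (cos_defect s t) n <= (2 * PI ^ 2 + 4 / s) * Rpower (Rabs t) s.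
Proof.
  intros Hs Ht n. set (d := Rabs t) in *.
  destruct (exists_nat_mul_between d Ht) as [N [HN HdN]].
  assert (HN0 : 0 < INR N) by (apply lt_0_INR; lia).
  set (C := 2 * PI ^ 2 * t ^ 2 * Rpower (INR N) (1 - s)).
  assert (Hhead : INR N * C <= 2 * PI ^ 2 * Rpower d s).
  { pose proof (sqr_mul_Rpower_le d (INR N) s ltac:(lra) HN0 ltac:(lra) ltac:(lra)).
    unfold C. rewrite <- (pow2_abs t). fold d. pose proof PI_RGT_0. nra. }
  pose proof (Rpower_opp_le_of_mul_ge d (INR N) s ltac:(lra) HN0 ltac:(lra) ltac:(lra))
    as Htail.
  eapply Rle_trans.
  - apply (sum_n_split_le _ (fun j => 2 / s * Rpower (INR j) (- s)) N C).
    + pose proof (Rpower_pos (INR N) (1 - s)). pose proof PI_RGT_0.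
      assert (0 <= t ^ 2) by nra. unfold C. apply Rmult_le_pos; nra.
    + intros j. apply Rmult_le_pos; [apply Rdiv_le_0_compat; lra | left; apply Rpower_pos].
    + intros j Hj. apply cos_defect_le_head; [lra | exact Hj].
    + intros j Hj. apply cos_defect_le_tail; [lra | lia].
  - cbv beta.
    assert (2 / s * Rpower (INR N) (- s) <= 2 / s * (2 * Rpower d s))
      by (apply Rmult_le_compat_l; [apply Rdiv_le_0_compat|]; lra).
    replace ((2 * PI ^ 2 + 4 / s) * Rpower d s)
      with (2 * PI ^ 2 * Rpower d s + 2 / s * (2 * Rpower d s)) by (field; lra).
    lra.
Qed.

Lemma Series_cos_defect_le s t : 0 < s <= 1 -> Rabs t <= 1 / 2 ->
  Series (cos_defect s t) <= (2 * PI ^ 2 + 4 / s) * rpow (Rabs t) s.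
Proof.
  intros Hs Ht. unfold rpow. destruct (Req_EM_T (Rabs t) 0) as [H0 | H0].
  - apply Rabs_eq_0 in H0. subst t. rewrite Series_cos_defect_0. lra.
  - apply Series_le_of_sum_n; [apply ex_series_cos_defect; lra|].
    apply sum_n_cos_defect_le; [exact Hs|]. split; [|exact Ht].
    pose proof (Rabs_pos t). lra.
Qed.

Lemma rpow_nonneg t p : 0 <= rpow t p.
Proof. unfold rpow. destruct (Req_EM_T t 0); [lra | left; apply Rpower_pos]. Qed.

Lemma dT_representative x y : exists t, Rabs t = dT x y /\
  forall k : nat, cos (2 * PI * INR k * (x - y)) = cos (2 * PI * INR k * t).
Proof.
  assert (Hshift : forall (k : nat) u,
    cos (2 * PI * INR k * (u + 1)) = cos (2 * PI * INR k * u)).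
  { intros k u. rewrite <- (cos_period (2 * PI * INR k * u) k). f_equal. ring. }
  unfold dT, Rmin.
  destruct (Rle_dec (Rabs (x - y)) (Rabs (x - y + 1)));
    destruct (Rle_dec (Rabs (x - y - 1)) _).
  all: first
    [ exists (x - y - 1); split; [reflexivity|]; intros k;
      rewrite <- (Hshift k (x - y - 1)); f_equal; ring
    | exists (x - y); split; reflexivity
    | exists (x - y + 1); split; [reflexivity|]; intros k; symmetry; apply Hshift ].
Qed.

Lemma K1_eq_sub_defect r beta0 beta1 x y t : 1 / 2 < r ->
  beta0 + beta1 * zeta (2 * r) = 1 ->
  (forall k : nat, cos (2 * PI * INR k * (x - y)) = cos (2 * PI * INR k * t)) ->
  K1 r beta0 beta1 x y = 1 - beta1 * Series (cos_defect (2 * r - 1) t).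
Proof.
  intros Hr Hz Hcos. set (s := 2 * r - 1).
  assert (Hs : 0 < s) by (unfold s; lra).
  replace (2 * r) with (1 + s) in Hz by (unfold s; ring).
  rewrite <- Hz. unfold K1. replace (2 * r) with (1 + s) by (unfold s; ring).
  rewrite (Series_ext _ (fun n => zeta_term (1 + s) n - cos_defect s t n)).
  - rewrite Series_minus by (apply ex_series_zeta || apply ex_series_cos_defect; exact Hs).
    unfold zeta. fold (zeta_term (1 + s)). ring.
  - intros n. unfold cos_defect, zeta_term. rewrite Hcos. ring.
Qed.

Lemma le_twice_of_mul_zeta_lt_1 s beta : 0 < s -> beta * zeta (1 + s) < 1 -> beta <= 2 * s.
Proof.
  intros Hs Hbeta. destruct (Rle_or_lt beta 0) as [Hneg | Hpos]; [lra|].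
  pose proof (zeta_ge_inv s Hs) as Hzeta.
  assert (beta * (1 / (2 * s)) < 1) by nra.
  replace beta with (beta * (1 / (2 * s)) * (2 * s)) by (field; lra).
  nra.
Qed.

Lemma scaled_Series_cos_defect_le s beta t : 0 < s <= 1 -> 0 <= beta <= 2 * s ->
  Rabs t <= 1 / 2 -> beta * Series (cos_defect s t) <= 100 * rpow (Rabs t) s.
Proof.
  intros Hs Hbeta Ht.
  pose proof (Series_cos_defect_le s t Hs Ht) as HS.
  set (rho := rpow (Rabs t) s) in *.
  pose proof (rpow_nonneg (Rabs t) s) as Hrho. fold rho in Hrho.
  pose proof PI_4. pose proof PI_RGT_0.
  assert (Hc : 0 <= 2 * PI ^ 2 + 4 / s)
    by (apply Rplus_le_le_0_compat; [nra | apply Rdiv_le_0_compat; lra]).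
  apply Rle_trans with (2 * s * ((2 * PI ^ 2 + 4 / s) * rho)).
  - apply Rle_trans with (beta * ((2 * PI ^ 2 + 4 / s) * rho)).
    + apply Rmult_le_compat_l; lra.
    + apply Rmult_le_compat_r; [apply Rmult_le_pos|]; lra.
  - replace (2 * s * ((2 * PI ^ 2 + 4 / s) * rho)) with ((4 * PI ^ 2 * s + 8) * rho)
      by (field; lra).
    apply Rmult_le_compat_r; nra.
Qed.

Lemma inv_sqrt2_PI_le_half : 1 / (sqrt 2 * PI) <= 1 / 2.
Proof.
  apply Rmult_le_compat_l; [lra|]. apply Rinv_le_contravar; [lra|].
  pose proof PI2_1. assert (1 <= sqrt 2) by (rewrite <- sqrt_1; apply sqrt_le_1_alt; lra).
  nra.
Qed.

Theorem lemma3p5 :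
  exists alpha : R, 0 < alpha /\
    forall r beta0 beta1 : R,
      1 / 2 < r <= 1 ->
      0 < beta0 -> 0 < beta1 ->
      beta0 + beta1 * zeta (2 * r) = 1 ->
      (forall x : R, in_torus x -> K1 r beta0 beta1 x x = 1) /\
      (forall x y : R, in_torus x -> in_torus y ->
         dT x y <= 1 / (sqrt 2 * PI) ->
         K1 r beta0 beta1 x y >= 1 - alpha * rpow (dT x y) (2 * r - 1)).
Proof.
  exists 100. split; [lra|].
  intros r beta0 beta1 Hr Hb0 Hb1 Hz.
  assert (Hs : 0 < 2 * r - 1 <= 1) by lra.
  assert (Hbeta1 : beta1 <= 2 * (2 * r - 1)).
  { apply le_twice_of_mul_zeta_lt_1; [lra|].
    replace (1 + (2 * r - 1)) with (2 * r) by ring. lra. }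
  split.
  - intros x _. rewrite (K1_eq_sub_defect r beta0 beta1 x x 0); [|lra | exact Hz |].
    + rewrite Series_cos_defect_0. ring.
    + intros k. f_equal. ring.
  - intros x y _ _ Hd.
    destruct (dT_representative x y) as [t [Ht Hcos]].
    rewrite (K1_eq_sub_defect r beta0 beta1 x y t); [|lra | exact Hz | exact Hcos].
    rewrite <- Ht.
    pose proof inv_sqrt2_PI_le_half.
    pose proof (scaled_Series_cos_defect_le (2 * r - 1) beta1 t Hs ltac:(lra) ltac:(lra)).
    lra.
Qed.
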